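(* Let $M$ be a smooth hypersurface immersed in $\mathbb R^{n+1}$ and suppose that at some point, for some $\varepsilon>0$, the second fundamental form satisfies $\alpha\ge \varepsilon H g>0$ (i.e. $k_1\ge\varepsilon H>0$). Then $\varepsilon\le 1/n$, and at that point $$|H\nabla\alpha-\alpha\nabla H|^2\ \ge\ \frac{n-1}{2}\,\varepsilon^2H^2|\nabla A|^2 .$$
   Context: $g$ is the induced metric, $\alpha$ the second fundamental form, $A$ the Weingarten map ($\alpha=g(A\cdot,\cdot)$), $k_1\le\dots\le k_n$ the principal curvatures, $H=\sum k_i$, $\nabla$ the Levi-Civita connection of $g$; norms are taken with respect to $g$, and $H\nabla\alpha-\alpha\nabla H$ denotes the 3-tensor $H\nabla_i\alpha_{jl}-\alpha_{jl}\nabla_iH$. *)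

(* Pointwise (orthonormal-frame) model of the data of a
   hypersurface in R^(n+1) at a point. *)
From HB Require Import structures.
From mathcomp Require Import all_boot all_order all_algebra.
Set Implicit Arguments. Unset Strict Implicit. Unset Printing Implicit Defensive.
Import Order.TTheory GRing.Theory Num.Theory.
Local Open Scope ring_scope.

(* alpha : components alpha_{jl} of the second fundamental form in an
   orthonormal frame at the point; D i j l = nabla_i alpha_{jl}. *)

Definition meanH (R : ringType) (n : nat) (alpha : 'M[R]_n) : R := \tr alpha.

Definition gradH (R : ringType) (n : nat) (D : 'I_n -> 'I_n -> 'I_n -> R)
  (i : 'I_n) : R := \sum_(j < n) D i j j.

Definition norm2_3 (R : ringType) (n : nat) (T : 'I_n -> 'I_n -> 'I_n -> R) : R :=
  \sum_(i < n) \sum_(j < n) \sum_(l < n) T i j l ^+ 2.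

Definition HDa (R : ringType) (n : nat) (alpha : 'M[R]_n)
  (D : 'I_n -> 'I_n -> 'I_n -> R) : 'I_n -> 'I_n -> 'I_n -> R :=
  fun i j l => meanH alpha * D i j l - alpha j l * gradH D i.

Definition qform (R : ringType) (n : nat) (b : 'M[R]_n) (v : 'rV[R]_n) : R :=
  (v *m b *m v^T) 0 0.

From HB Require Import structures.
From mathcomp Require Import all_boot all_order all_algebra.
From mathcomp Require Import ring lra.
Import Order.TTheory GRing.Theory Num.Theory.
Local Open Scope ring_scope.

(* Split each derivative as nabla_i alpha = nu_i alpha + Z_i with Z_i orthogonal to
   alpha.  Removing the alpha-component gives |H nabla alpha - alpha nabla H|^2 >= H^2 |Z|^2,
   while |nabla alpha|^2 = |Z|^2 + |alpha|^2 |nu|^2.  The Codazzi symmetry turns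
   nu_i alpha_jl - nu_j alpha_il into Z_jil - Z_ijl, and alpha >= b := eps H bounds
   |(nu_i e_j - nu_j e_i) alpha|^2 below by b^2 (nu_i^2 + nu_j^2); summing over i <> j
   gives c |nu|^2 <= |Z|^2 with c = (n - 1) b^2 / 2.  The 2x2 principal minors of alpha
   are at least b^2, so H^2 - |alpha|^2 >= n (n - 1) b^2 >= c, and
   c |nabla alpha|^2 <= (c + |alpha|^2) |Z|^2 <= H^2 |Z|^2.  Finally n b <= tr alpha = H
   gives eps <= 1/n. *)

Lemma sum_offdiagE (R : zmodType) (n : nat) (F : 'I_n -> 'I_n -> R) :
  \sum_i \sum_(j | j != i) F i j = \sum_i \sum_j F i j - \sum_i F i i.
Proof.
by rewrite -sumrB; apply: eq_bigr => i _; rewrite [in RHS](bigD1 i) //= addrC addrK.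
Qed.

Lemma sum_offdiag_pairs (R : comPzRingType) (n : nat) (f : 'I_n -> R) :
  \sum_i \sum_(j | j != i) (f i + f j) = 2 * (n%:R - 1) * \sum_i f i.
Proof.
rewrite sum_offdiagE.
under eq_bigr do rewrite big_split /= sumr_const card_ord -mulr_natr.
rewrite !big_split /= -mulr_suml sumr_const card_ord -mulr_natr.
move: (\sum_i f i) => S; ring.
Qed.

Definition row2 {R : pzRingType} {n : nat} (j i : 'I_n) (x y : R) : 'rV[R]_n :=
  x *: 'e_j + y *: 'e_i.

Section TwoPointRows.

Context {R : comNzRingType} {n : nat}.
Implicit Types (A : 'M[R]_n) (v : 'rV[R]_n).

Lemma sum_row2 (j i : 'I_n) (x y : R) (F : 'I_n -> R) :
  \sum_l row2 j i x y 0 l * F l = x * F j + y * F i.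
Proof.
have sum_delta k : \sum_l (l == k)%:R * F l = F k.
  rewrite (bigD1 k) //= eqxx mul1r big1 ?addr0 // => l neq_lk.
  by rewrite (negbTE neq_lk) mul0r.
under eq_bigr do rewrite !mxE eqxx /= mulrDl -!mulrA.
by rewrite big_split /= -!mulr_sumr !sum_delta.
Qed.

Lemma mulmx_row2 A (j i l : 'I_n) (x y : R) :
  (row2 j i x y *m A) 0 l = x * A j l + y * A i l.
Proof. by rewrite mulmxDl -!scalemxAl -!rowE !mxE. Qed.

Lemma qformE A v : qform A v = \sum_l (v *m A) 0 l * v 0 l.
Proof. by rewrite /qform [LHS]mxE; apply: eq_bigr => l _; rewrite [v^T _ _]mxE. Qed.

Lemma qform1E v : qform 1%:M v = \sum_l v 0 l ^+ 2.
Proof. by rewrite qformE mulmx1; under eq_bigr do rewrite -expr2. Qed.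

Lemma qform_row2 A (j i : 'I_n) (x y : R) :
  qform A (row2 j i x y) = x * (x * A j j + y * A i j) + y * (x * A j i + y * A i i).
Proof.
rewrite qformE; under eq_bigr do rewrite mulmx_row2 mulrC.
by rewrite sum_row2.
Qed.

Lemma sum_sqr_row2 (j i : 'I_n) (x y : R) :
  i != j -> \sum_l row2 j i x y 0 l ^+ 2 = x ^+ 2 + y ^+ 2.
Proof.
move=> neq_ij; rewrite -qform1E qform_row2 !mxE !eqxx (negbTE neq_ij) eq_sym (negbTE neq_ij).
by rewrite /=; ring.
Qed.

End TwoPointRows.

Lemma sqr_mxtrace_subE (R : comPzRingType) (n : nat) (A : 'M[R]_n) :
  \tr A ^+ 2 - \sum_j \sum_l A j l ^+ 2 =
  \sum_j \sum_(l | l != j) (A j j * A l l - A j l ^+ 2).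
Proof.
rewrite sum_offdiagE; under [X in _ = _ - X]eq_bigr do rewrite expr2 subrr.
rewrite big1_eq subr0 /mxtrace expr2 mulr_suml -sumrB.
by apply: eq_bigr => j _; rewrite mulr_sumr -sumrB.
Qed.

Section PositiveLowerBound.

Context {R : realFieldType} {n : nat} {A : 'M[R]_n} {b : R}.
Hypothesis b_gt0 : 0 < b.
Hypothesis A_ge : forall v, b * qform 1%:M v <= qform A v.

Lemma diag_ge (j : 'I_n) : b <= A j j.
Proof.
have := A_ge (row2 j j 1 0); rewrite !qform_row2 !mxE eqxx /=.
by rewrite !mul0r !addr0 !mul1r mulr1.
Qed.

Lemma mxtrace_ge : b *+ n <= \tr A.
Proof.
rewrite /mxtrace -[n in b *+ n]card_ord -sumr_const.
by apply: ler_sum => j _; exact: diag_ge.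
Qed.

Lemma sqr_norm_mulmx_ge (v : 'rV[R]_n) :
  b ^+ 2 * \sum_l v 0 l ^+ 2 <= \sum_l (v *m A) 0 l ^+ 2.
Proof.
have := A_ge v; rewrite qform1E qformE.
have : 0 <= \sum_l ((v *m A) 0 l - b * v 0 l) ^+ 2.
  by apply: sumr_ge0 => l _; exact: sqr_ge0.
have -> : \sum_l ((v *m A) 0 l - b * v 0 l) ^+ 2 = \sum_l (v *m A) 0 l ^+ 2
    - 2 * b * \sum_l (v *m A) 0 l * v 0 l + b ^+ 2 * \sum_l v 0 l ^+ 2.
  rewrite !mulr_sumr -sumrB -big_split; apply: eq_bigr => l _ /=; ring.
move: (\sum_l _ ^+ 2) (\sum_l _ * _) (\sum_l v 0 l ^+ 2) => S Q N.
have := ltW b_gt0; nra.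
Qed.

Hypothesis A_sym : A^T = A.

Lemma minor2_ge (j l : 'I_n) : j != l -> b ^+ 2 <= A j j * A l l - A j l ^+ 2.
Proof.
(* [qform A (A l l e_j - A j l e_l) = A l l * (A j j * A l l - A j l ^+ 2)] *)
move=> neq_jl; have := A_ge (row2 j l (A l l) (- A j l)).
have A_lj : A l j = A j l by rewrite -{1}A_sym mxE.
rewrite !qform_row2 !mxE !eqxx (negbTE neq_jl) eq_sym (negbTE neq_jl) A_lj /=.
have b_le := diag_ge l; have c_gt0 := lt_le_trans b_gt0 b_le.
move: (A j j) (A l l) (A j l) b_le c_gt0 => a c d b_le c_gt0 qf.
have : c * (b * c) <= c * (a * c - d ^+ 2).
  have : 0 <= b * d ^+ 2 by rewrite mulr_ge0 ?sqr_ge0 ?ltW.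
  move: qf; rewrite !mulr1 !mulr0 !addr0 !add0r; lra.
rewrite ler_pM2l // => /(le_trans _); apply.
by rewrite expr2 ler_pM2l.
Qed.

Lemma sqr_mxtrace_ge :
  n%:R * (n%:R - 1) * b ^+ 2 <= \tr A ^+ 2 - \sum_j \sum_l A j l ^+ 2.
Proof.
have -> : n%:R * (n%:R - 1) * b ^+ 2 = \sum_(j < n) \sum_(l < n | l != j) b ^+ 2.
  rewrite sum_offdiagE !sumr_const !card_ord.
  by rewrite -(mulr_natr (b ^+ 2 *+ n)) -(mulr_natr (b ^+ 2)); ring.
rewrite sqr_mxtrace_subE; apply: ler_sum => j _; apply: ler_sum => l.
by rewrite eq_sym => /minor2_ge.
Qed.

End PositiveLowerBound.

Lemma sum_pairE (R : nmodType) (n : nat) (F : 'I_n -> 'I_n -> R) :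
  \sum_j \sum_l F j l = \sum_(p : 'I_n * 'I_n) F p.1 p.2.
Proof. exact: pair_bigA. Qed.

Definition proj_coef {R : fieldType} {I : finType} (X a : I -> R) : R :=
  (\sum_p X p * a p) / \sum_p a p ^+ 2.

Section Projection.

Context {R : realFieldType} {I : finType}.
Variables (X a : I -> R).

Lemma proj_coef_orth : \sum_p (X p - proj_coef X a * a p) * a p = 0.
Proof.
under eq_bigr do rewrite mulrBl -mulrA -expr2.
rewrite sumrB -mulr_sumr /proj_coef.
have [a0 | a_neq0] := eqVneq (\sum_p a p ^+ 2) 0; last by rewrite divfK ?subrr.
have a_eq0 p : a p = 0.
  by apply/eqP; rewrite -sqrf_eq0; apply/eqP/(psumr_eq0P _ a0) => // q _; exact: sqr_ge0.
by rewrite a0 mulr0 big1 ?subr0 // => p _; rewrite a_eq0 mulr0.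
Qed.

Lemma sum_sqr_proj :
  \sum_p X p ^+ 2 =
  \sum_p (X p - proj_coef X a * a p) ^+ 2 + proj_coef X a ^+ 2 * \sum_p a p ^+ 2.
Proof.
set c := proj_coef X a.
have -> : \sum_p X p ^+ 2 = \sum_p ((X p - c * a p) ^+ 2
    + (2 * c) * ((X p - c * a p) * a p) + c ^+ 2 * a p ^+ 2).
  by apply: eq_bigr => p _; ring.
by rewrite !big_split /= -!mulr_sumr proj_coef_orth mulr0 addr0.
Qed.

Lemma sum_sqr_proj_le (h g : R) :
  h ^+ 2 * \sum_p (X p - proj_coef X a * a p) ^+ 2 <= \sum_p (h * X p - g * a p) ^+ 2.
Proof.
set c := proj_coef X a.
have -> : \sum_p (h * X p - g * a p) ^+ 2 = \sum_p (h ^+ 2 * (X p - c * a p) ^+ 2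
    + (2 * h * (h * c - g)) * ((X p - c * a p) * a p) + (h * c - g) ^+ 2 * a p ^+ 2).
  by apply: eq_bigr => p _; ring.
rewrite !big_split /= -!mulr_sumr proj_coef_orth mulr0 addr0 lerDl.
by rewrite mulr_ge0 ?sqr_ge0 // sumr_ge0 // => p _; rewrite sqr_ge0.
Qed.

End Projection.

Lemma sum_sqr_swap_sub_le (R : realFieldType) (n : nat) (T : 'I_n -> 'I_n -> 'I_n -> R) :
  \sum_i \sum_j \sum_l (T j i l - T i j l) ^+ 2 <= 4 * norm2_3 T.
Proof.
apply: (@le_trans _ _ (\sum_i \sum_j \sum_l (2 * T j i l ^+ 2 + 2 * T i j l ^+ 2))).
  do 3 (apply: ler_sum => ? _); rewrite -subr_ge0.
  have -> : forall x y : R, 2 * x ^+ 2 + 2 * y ^+ 2 - (x - y) ^+ 2 = (x + y) ^+ 2.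
    by move=> x y; ring.
  exact: sqr_ge0.
under eq_bigr do under eq_bigr do rewrite big_split /= -!mulr_sumr.
under eq_bigr do rewrite big_split /= -!mulr_sumr.
rewrite big_split /= -!mulr_sumr exchange_big /= -mulrDl -/(norm2_3 T).
by rewrite -natrD.
Qed.

Section Decomposition.

Context {R : realFieldType} {n : nat}.
Variables (alpha : 'M[R]_n) (D : 'I_n -> 'I_n -> 'I_n -> R).

Definition D_coef (i : 'I_n) : R :=
  proj_coef (fun p : 'I_n * 'I_n => D i p.1 p.2) (fun p => alpha p.1 p.2).

Definition D_perp (i j l : 'I_n) : R := D i j l - D_coef i * alpha j l.

Lemma norm2_3_HDa_ge : meanH alpha ^+ 2 * norm2_3 D_perp <= norm2_3 (HDa alpha D).
Proof.
rewrite /norm2_3 mulr_sumr; apply: ler_sum => i _; rewrite !sum_pairE.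
under [X in _ <= X]eq_bigr do rewrite /HDa [alpha _ _ * _]mulrC.
exact: sum_sqr_proj_le.
Qed.

Lemma norm2_3_split :
  norm2_3 D = norm2_3 D_perp + (\sum_j \sum_l alpha j l ^+ 2) * \sum_i D_coef i ^+ 2.
Proof.
rewrite /norm2_3 mulr_sumr -big_split; apply: eq_bigr => i _ /=.
rewrite !sum_pairE (sum_sqr_proj _ (fun p : 'I_n * 'I_n => alpha p.1 p.2)).
by rewrite [_ ^+ 2 * _]mulrC.
Qed.

Hypothesis D_codazzi : forall i j l, D i j l = D j i l.
Context {b : R}.
Hypothesis b_gt0 : 0 < b.
Hypothesis alpha_ge : forall v, b * qform 1%:M v <= qform alpha v.

(* By Codazzi, antisymmetrizing D_perp in its first two indices only sees the
   D_coef part. *)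
Lemma D_coef_pair_ge (i j : 'I_n) : j != i ->
  b ^+ 2 * (D_coef i ^+ 2 + D_coef j ^+ 2) <= \sum_l (D_perp j i l - D_perp i j l) ^+ 2.
Proof.
move=> neq_ji; rewrite -[D_coef j ^+ 2]sqrrN.
rewrite -(sum_sqr_row2 j i (D_coef i) (- D_coef j)) 1?eq_sym //.
have -> : \sum_l (D_perp j i l - D_perp i j l) ^+ 2 =
    \sum_l (row2 j i (D_coef i) (- D_coef j) *m alpha) 0 l ^+ 2.
  by apply: eq_bigr => l _; rewrite mulmx_row2 /D_perp D_codazzi; congr (_ ^+ 2); ring.
exact: sqr_norm_mulmx_ge.
Qed.

Lemma D_coef_bound : (n%:R - 1) * b ^+ 2 * \sum_i D_coef i ^+ 2 <= 2 * norm2_3 D_perp.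
Proof.
have offdiagE : 2 * ((n%:R - 1) * b ^+ 2 * \sum_i D_coef i ^+ 2) =
    \sum_i \sum_(j | j != i) b ^+ 2 * (D_coef i ^+ 2 + D_coef j ^+ 2).
  under [RHS]eq_bigr do under eq_bigr do rewrite mulrDr.
  by rewrite (sum_offdiag_pairs _ _ (fun i => b ^+ 2 * D_coef i ^+ 2)) -mulr_sumr; ring.
rewrite -(@ler_pM2l _ 2) ?ltr0n // offdiagE.
apply: le_trans (_ : _ <= \sum_i \sum_j \sum_l (D_perp j i l - D_perp i j l) ^+ 2) _.
  apply: ler_sum => i _; rewrite [X in _ <= X](bigD1 i) //= -[X in X <= _]add0r.
  apply: lerD; first by apply: sumr_ge0 => l _; exact: sqr_ge0.
  by apply: ler_sum => j; exact: D_coef_pair_ge.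
by rewrite mulrA -natrM; exact: sum_sqr_swap_sub_le.
Qed.

End Decomposition.

Theorem mainTheorem3 (R : rcfType) (n : nat) (alpha : 'M[R]_n)
  (D : 'I_n -> 'I_n -> 'I_n -> R) (eps : R)
  (alpha_sym : alpha^T = alpha)
  (D_sym_jl : forall i j l, D i j l = D i l j)
  (D_codazzi : forall i j l, D i j l = D j i l)
  (eps_pos : 0 < eps)
  (epsH_pos : 0 < eps * meanH alpha)
  (alpha_ge : forall v : 'rV[R]_n,
      eps * meanH alpha * qform 1%:M v <= qform alpha v) :
  eps <= n%:R^-1 /\
  (n%:R - 1) / 2 * eps ^+ 2 * meanH alpha ^+ 2 * norm2_3 D
    <= norm2_3 (HDa alpha D).
Proof.
have H_gt0 : 0 < meanH alpha by rewrite -(pmulr_rgt0 _ eps_pos).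
have n_gt0 : (0 < n)%N.
  move: H_gt0; rewrite /meanH /mxtrace; case: (posnP n) => [n0|//].
  by rewrite big1 ?ltxx // => i _; have := ltn_ord i; rewrite {2}n0.
split.
  have := mxtrace_ge alpha_ge; rewrite -/(meanH alpha) -[eps * _ *+ n]mulr_natr mulrAC.
  rewrite -[X in _ <= X](mul1r (meanH alpha)) ler_pM2r // => eps_n_le1.
  by rewrite -[n%:R^-1]mul1r ler_pdivlMr // ltr0n.
rewrite (norm2_3_split alpha) -/(meanH alpha).
set H := meanH alpha; set A2 := \sum_j _; set V := \sum_i _; set Zn := norm2_3 _.
set c := (n%:R - 1) / 2 * eps ^+ 2 * H ^+ 2.
have n_ge1 : 1 <= n%:R :> R by rewrite ler1n.
have c_le : c <= H ^+ 2 - A2.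
  apply: le_trans (sqr_mxtrace_ge epsH_pos alpha_ge alpha_sym); rewrite /c exprMn.
  have : 0 <= (n%:R - 1) * (eps ^+ 2 * H ^+ 2).
    by rewrite mulr_ge0 ?subr_ge0 // mulr_ge0 ?sqr_ge0.
  nra.
have cV_le : c * V <= Zn.
  have := D_coef_bound alpha D D_codazzi epsH_pos alpha_ge; rewrite -/V -/Zn /c exprMn; lra.
have A2_ge0 : 0 <= A2 by do 2 (apply: sumr_ge0 => ? _); exact: sqr_ge0.
have Zn_ge0 : 0 <= Zn by do 3 (apply: sumr_ge0 => ? _); exact: sqr_ge0.
apply: le_trans (norm2_3_HDa_ge alpha D); rewrite -/H -/Zn.
have := ler_wpM2l A2_ge0 cV_le; have := ler_wpM2r Zn_ge0 c_le; nra.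
Qed.
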